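(* Let $\gamma>0$ and $\theta\in\mathbb R$. For each $L\ge2$ let $w_1,\dots,w_L\in\mathbb R$ with $|w_j|\ge2\gamma$ for all $j$, and consider on $\mathcal F(\mathbb C^L)$ $$\mathbf H_L=\sum_{j=1}^{L-1}w_j\,i{\mathfrak b}_{2j}{\mathfrak b}_{2j+1}+w_L\,i{\mathfrak b}_{2L}{\mathfrak b}_1 .$$ Then $\mathbf H_L$ has a spectral gap above its ground state energy that is bounded below uniformly in the length $L$ of the chain.
   Context: $\mathcal F(\mathbb C^L)$ is the fermionic Fock space with CAR operators ${\mathfrak a}_j$, $j=1,\dots,L$. Majorana operators: ${\mathfrak b}_{2j-1}=e^{i\theta/2}{\mathfrak a}_j+e^{-i\theta/2}{\mathfrak a}_j^*$, ${\mathfrak b}_{2j}=-ie^{i\theta/2}{\mathfrak a}_j+ie^{-i\theta/2}{\mathfrak a}_j^*$; in terms of these, $\mathbf H_L$ is the closed (periodic) Kitaev chain $\sum_{j=1}^{L-1}w_j[-({\mathfrak a}_j^*{\mathfrak a}_{j+1}+{\mathfrak a}_{j+1}^*{\mathfrak a}_j)+e^{i\theta}{\mathfrak a}_j{\mathfrak a}_{j+1}+e^{-i\theta}{\mathfrak a}_{j+1}^*{\mathfrak a}_j^*]+w_L[-({\mathfrak a}_L^*{\mathfrak a}_1+{\mathfrak a}_1^*{\mathfrak a}_L)+e^{i\theta}{\mathfrak a}_L{\mathfrak a}_1+e^{-i\theta}{\mathfrak a}_1^*{\mathfrak a}_L^*]$ with site-dependent couplings. The spectral gap above the ground state energy is the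 distance between the lowest eigenvalue and the next distinct eigenvalue. *)

From HB Require Import structures.
From mathcomp Require Import all_boot all_order all_algebra.
From mathcomp Require Import reals trigo.
From mathcomp.real_closed Require Import complex.
Set Implicit Arguments. Unset Strict Implicit. Unset Printing Implicit Defensive.
Import Order.TTheory GRing.Theory Num.Theory.
Local Open Scope ring_scope.
Local Open Scope complex_scope.

Section Fock.
Variable R : realType.
Local Notation C := (R[i]).

(* Fock space F(C^L) ~ C^(2^L): basis vector n : 'I_(2^L) is the occupation
   configuration whose mode k (0-based, k < L) is occupied iff bit k of n is 1. *)
Definition occ (n k : nat) : bool := odd (n %/ 2 ^ k).

Definition jwsign (n k : nat) : C := (-1) ^+ (\sum_(i < k) occ n i).

(* Annihilation operator a_{k+1} (paper's 1-based index j = k+1):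
   a_k |n> = jwsign n k |n - 2^k> if mode k occupied, 0 otherwise. *)
Definition annih (L : nat) (k : 'I_L) : 'M[C]_(2 ^ L) :=
  \matrix_(m, n) (if occ n k && (nat_of_ord m == nat_of_ord n - 2 ^ k)%N
                  then jwsign n k else 0).

Definition adjmx (n : nat) (A : 'M[C]_n) : 'M[C]_n := map_mx Num.conj A^T.

Definition creat (L : nat) (k : 'I_L) : 'M[C]_(2 ^ L) := adjmx (annih k).

Definition phase (theta : R) : C := cos (theta / 2) +i* sin (theta / 2).

(* Majorana operators, 0-based mode k corresponds to paper's j = k+1:
   bodd k  = b_{2j-1} = e^{i th/2} a_j + e^{-i th/2} a_j^*
   beven k = b_{2j}   = -i e^{i th/2} a_j + i e^{-i th/2} a_j^*              *)
Definition bodd (theta : R) (L : nat) (k : 'I_L) : 'M[C]_(2 ^ L) :=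
  phase theta *: annih k + Num.conj (phase theta) *: creat k.
Definition beven (theta : R) (L : nat) (k : 'I_L) : 'M[C]_(2 ^ L) :=
  (- 'i * phase theta) *: annih k + ('i * Num.conj (phase theta)) *: creat k.

(* H_L = sum_{j=1}^{L-1} w_j i b_{2j} b_{2j+1} + w_L i b_{2L} b_1 ;
   in 0-based form: sum_{k<L} w_k i beven(k) bodd(k+1 mod L). *)
Definition HL (theta : R) (L : nat) (w : 'I_L -> R) : 'M[C]_(2 ^ L) :=
  \sum_(k < L) (((w k)%:C * 'i) *: (beven theta k *m bodd theta (ordS k))).

(* A has ground state energy E0 (its lowest eigenvalue; the order on C is
   the numClosedField order: x <= y iff y - x is a nonnegative real). *)
Definition ground_energy (n : nat) (A : 'M[C]_n) (E0 : C) : Prop :=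
  eigenvalue A E0 /\ forall l, eigenvalue A l -> E0 <= l.

Definition spectral_gap_ge (n : nat) (A : 'M[C]_n) (c : R) : Prop :=
  exists E0, [/\ ground_energy A E0,
    (exists l, eigenvalue A l /\ l != E0) &
    (forall l, eigenvalue A l -> l != E0 -> E0 + c%:C <= l)].

End Fock.

(* In Majorana form H_L = sum_j w_j S_j with S_j = i b_{2j} b_{2j+1} (indices mod 2L).
   The canonical anticommutation relations make the b's a Clifford family (b^2 = 1,
   distinct b's anticommute), so the S_j are commuting involutions, and for every sign
   vector s the product P_s = prod_j (1 + s_j S_j)/2 satisfies P_s H_L = E(s) P_s with
   E(s) = sum_j s_j w_j.  Conjugation by b_{2k} anticommutes with S_k alone, hence swaps
   (1 + S_k)/2 and (1 - S_k)/2, whose sum is 1: so no P_s vanishes, and every eigenvector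
   is seen by some P_s.  The spectrum is therefore exactly {E(s)}; it is minimised by
   s_j = -sgn w_j, and flipping any sign costs 2|w_j| >= 4 gamma. *)

From HB Require Import structures.
From mathcomp Require Import all_boot all_order all_algebra.
From mathcomp Require Import reals trigo.
From mathcomp.real_closed Require Import complex.
From mathcomp Require Import zify ring lra.
Set Implicit Arguments. Unset Strict Implicit. Unset Printing Implicit Defensive.
Import Order.TTheory GRing.Theory Num.Theory.

Lemma occD_pow2_same n l : occ (n + 2 ^ l) l = ~~ occ n l.
Proof. by rewrite /occ addnC -{1}(mul1n (2 ^ l)) divnMDl ?expn_gt0. Qed.

Lemma occD_pow2 n l k : ~~ occ n l -> occ (n + 2 ^ l) k = occ n k (+) (k == l).
Proof.
move=> nl; case: (ltngtP k l) => [lt_kl|lt_lk|->]; last first.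
- by rewrite occD_pow2_same (negbTE nl).
- rewrite addbF /occ -(subnKC (ltnW lt_lk)) expnD !divnMA.
  rewrite addnC -{1}(mul1n (2 ^ l)) divnMDl ?expn_gt0 // addnC.
  have -> : (k - l = (k - l).-1.+1)%N by lia.
  rewrite expnS !divnMA !divn2 halfD.
  by move: nl; rewrite /occ => /negbTE -> /=; rewrite add0n addn0.
- rewrite addbF /occ -(subnK (ltnW lt_kl)) expnD divnDMl ?expn_gt0 //.
  by rewrite oddD oddX subn_eq0 leqNgt lt_kl /= addbF.
Qed.

Lemma occ_pow2_split n l : occ n l -> exists2 m, ~~ occ m l & n = m + 2 ^ l.
Proof.
move=> nl; have le_pow_n : (2 ^ l <= n)%N.
  by rewrite -divn_gt0 ?expn_gt0 //; move: nl; rewrite /occ; case: (n %/ 2 ^ l).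
exists (n - 2 ^ l); last by rewrite subnK.
by move: nl; rewrite -{1}(subnK le_pow_n) occD_pow2_same.
Qed.

Lemma occD_pow2_ltn n k L :
  ~~ occ n k -> (n < 2 ^ L)%N -> (k < L)%N -> (n + 2 ^ k < 2 ^ L)%N.
Proof.
move=> nk n_lt k_lt; set q := n %/ 2 ^ k.
have pow_split : (2 ^ L = 2 ^ (L - k) * 2 ^ k)%N by rewrite -expnD subnK // ltnW.
have q_lt : (q < 2 ^ (L - k))%N by rewrite ltn_divLR ?expn_gt0 // -pow_split.
have q1_neq : q.+1 != 2 ^ (L - k).
  apply: contra nk => /eqP q1E; rewrite /occ -/q.
  by move: (congr1 odd q1E); rewrite oddX subn_eq0 leqNgt k_lt /= => /negbFE.
have n_lt_q1 : (n < q.+1 * 2 ^ k)%N by rewrite ltn_ceil ?expn_gt0.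
have q2_le : (q.+2 <= 2 ^ (L - k))%N by rewrite ltn_neqAle q1_neq q_lt.
rewrite pow_split; apply: leq_trans (leq_mul q2_le (leqnn _)).
by rewrite mulSn addnC ltn_add2l.
Qed.

Local Open Scope ring_scope.
Local Open Scope complex_scope.

Section JordanWignerSign.
Variable R : realType.

Lemma sum_occD_pow2 n l k : ~~ occ n l ->
  (\sum_(i < k) occ (n + 2 ^ l) i = \sum_(i < k) occ n i + (l < k))%N.
Proof.
move=> nl; rewrite (eq_bigr (fun i : 'I_k => occ n i + (i == l :> nat))%N); last first.
  move=> i _; rewrite occD_pow2 //.
  by case: eqP => [->|_]; [rewrite (negbTE nl) | rewrite addbF addn0].
rewrite big_split /=; congr (_ + _)%N.
rewrite (eq_bigr (fun i : 'I_k => if i == l :> nat then 1 else 0)%N) => [|i _]; last by case: eqP.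
by rewrite -big_mkcond /= (big_ord1_eq _ (fun=> 1%N)); case: (l < k)%N.
Qed.

Lemma jwsignD_pow2 n l k : ~~ occ n l ->
  jwsign R (n + 2 ^ l) k = jwsign R n k * (if (l < k)%N then -1 else 1).
Proof. by move=> nl; rewrite /jwsign sum_occD_pow2 // exprD; case: (l < k)%N. Qed.

Lemma jwsign_sqr n k : jwsign R n k * jwsign R n k = 1.
Proof. by rewrite /jwsign -exprD -signr_odd oddD addbb. Qed.

Lemma conj_jwsign n k : Num.conj (jwsign R n k) = jwsign R n k.
Proof. by rewrite /jwsign rmorphXn rmorphN1. Qed.

End JordanWignerSign.
Arguments jwsignD_pow2 {R n l}.

Section ColumnMonomialMatrix.
Variables (K : pzSemiRingType) (N : nat).

Definition colmx (P : pred nat) (f : nat -> nat) (c : nat -> K) : 'M[K]_N :=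
  \matrix_(m, n) (if P n && (m == f n :> nat) then c n else 0).

Lemma mul_colmx (P1 P2 : pred nat) (f1 f2 : nat -> nat) (c1 c2 : nat -> K) :
  (forall n, (n < N)%N -> P2 n -> (f2 n < N)%N) ->
  colmx P1 f1 c1 *m colmx P2 f2 c2 =
  colmx (fun n => P2 n && P1 (f2 n)) (f1 \o f2) (fun n => c1 (f2 n) * c2 n).
Proof.
move=> f2_lt; apply/matrixP => m n; rewrite !mxE.
have [P2n|nP2n] /= := boolP (P2 n); last first.
  by rewrite big1 // => p _; rewrite !mxE (negbTE nP2n) mulr0.
rewrite (bigD1 (Ordinal (f2_lt n (ltn_ord n) P2n))) //= big1 ?addr0 => [|p ne_p].
  by rewrite !mxE P2n eqxx /=; case: (P1 _) => /=; case: (m == _ :> nat); rewrite ?mul0r.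
rewrite !mxE P2n /=; have -> : (p == f2 n :> nat) = false.
  by apply/negbTE; apply: contra ne_p => /eqP pE; apply/eqP/val_inj.
by rewrite mulr0.
Qed.

End ColumnMonomialMatrix.
Arguments colmx {K N}.

Section CanonicalAnticommutation.
Variables (R : realType) (L : nat).
Local Notation C := R[i].
Local Notation N := (2 ^ L)%N.
Local Notation jw := (jwsign R).

Definition annih_colmx (k : nat) : 'M[C]_N :=
  colmx (occ^~ k) (subn^~ (2 ^ k)%N) (jw^~ k).
Definition creat_colmx (k : nat) : 'M[C]_N :=
  colmx (fun n => ~~ occ n k) (addn^~ (2 ^ k)%N) (jw^~ k).

Lemma annihE (k : 'I_L) : annih R k = annih_colmx k.
Proof. by apply/matrixP => m n; rewrite !mxE. Qed.

Lemma creatE (k : 'I_L) : creat R k = creat_colmx k.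
Proof.
apply/matrixP => m n; rewrite !mxE /=.
have [mk|mk] := boolP (occ m k); last first.
  rewrite rmorph0; case nk: (occ n k) => //=.
  by case: eqP => // mE; move: mk; rewrite mE occD_pow2_same nk.
have [m' m'k ->] := occ_pow2_split mk.
rewrite addnK eqn_add2r /= eq_sym.
have [<-|_] := eqVneq m' (nat_of_ord n); last by rewrite andbF rmorph0.
by rewrite m'k conj_jwsign jwsignD_pow2 // ltnn mulr1.
Qed.

Lemma subn_pow2_ltn k n : (n < N)%N -> (n - 2 ^ k < N)%N.
Proof. exact: leq_ltn_trans (leq_subr _ _). Qed.

Let swap_sign (k l : nat) : C := if (k < l)%N then -1 else 1.

Lemma swap_signD k l : k != l -> swap_sign k l + swap_sign l k = 0.
Proof.
by rewrite /swap_sign; case: ltngtP => // _ _; rewrite ?subrr // addrC subrr.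
Qed.

Lemma swap_signM k l : k != l -> swap_sign k l * swap_sign l k = -1.
Proof. by rewrite /swap_sign; case: ltngtP => // _ _; rewrite ?mulr1 ?mul1r. Qed.

Lemma annih_colmx_anticomm k l :
  annih_colmx k *m annih_colmx l + annih_colmx l *m annih_colmx k = 0.
Proof.
rewrite !mul_colmx; try by move=> n n_lt _; apply: subn_pow2_ltn.
apply/matrixP => m n; rewrite !mxE /=.
have [<-|kl] := eqVneq k l.
  case nk: (occ n k) => //=; last by rewrite addr0.
  by have [n' n'k ->] := occ_pow2_split nk; rewrite addnK (negbTE n'k) addr0.
case nl: (occ n l) => /=; last first.
  case nk: (occ n k) => //=; last by rewrite addr0.
  have [n' n'k nE] := occ_pow2_split nk.
  by move: nl; rewrite nE addnK occD_pow2 // eq_sym (negbTE kl) addbF => ->; rewrite addr0.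
have [n' n'l ->] := occ_pow2_split nl.
rewrite addnK occD_pow2 // (negbTE kl) addbF.
case n'k: (occ n' k) => /=; last by rewrite addr0.
have [n'' n''k n'E] := occ_pow2_split n'k.
have n''l : ~~ occ n'' l by move: n'l; rewrite n'E occD_pow2 // eq_sym (negbTE kl) addbF.
have n''lk : ~~ occ (n'' + 2 ^ l) k by rewrite occD_pow2 // (negbTE kl) addbF.
rewrite n'E addnK -addnA [(2 ^ k + _)%N]addnC addnA addnK occD_pow2_same n''l /= addnK.
case: (m == n'' :> nat); last by rewrite addr0.
rewrite !(jwsignD_pow2 _ n''lk) !(jwsignD_pow2 _ n''l) !(jwsignD_pow2 _ n''k) !ltnn !mulr1.
have := swap_signD kl; rewrite /swap_sign.
set a := if (k < l)%N then _ else _; set b := if (l < k)%N then _ else _ => ab.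
transitivity (jw n'' k * jw n'' l * (a + b)); first by ring.
by rewrite ab mulr0.
Qed.

Lemma annih_creat_colmx_anticomm k l : (l < L)%N ->
  annih_colmx k *m creat_colmx l + creat_colmx l *m annih_colmx k =
  if k == l then 1%:M else 0.
Proof.
move=> l_lt; rewrite !mul_colmx => [|n n_lt _|n n_lt]; last first.
- by move=> nk; apply: occD_pow2_ltn.
- exact: subn_pow2_ltn.
have [<-|kl] := eqVneq k l; apply/matrixP => m n.
  rewrite !mxE /= -[m == n]/(nat_of_ord m == nat_of_ord n).
  case nk: (occ n k) => /=.
    have [n' n'k nE] := occ_pow2_split nk.
    rewrite nE addnK n'k /= add0r; case: (m == _ :> nat) => //.
    by rewrite jwsignD_pow2 // ltnn mulr1 mulrC jwsign_sqr.
  rewrite occD_pow2_same nk addnK /= addr0; case: (m == _ :> nat) => //.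
  by rewrite jwsignD_pow2 ?nk // ltnn mulr1 jwsign_sqr.
rewrite !mxE /=; case nk: (occ n k) => /=; last first.
  case nl: (occ n l) => /=; first by rewrite addr0.
  by rewrite occD_pow2 ?nl // nk (negbTE kl) addr0.
have [n' n'k ->] := occ_pow2_split nk.
have n'kl : occ (n' + 2 ^ k) l = occ n' l by rewrite occD_pow2 // eq_sym (negbTE kl) addbF.
rewrite addnK n'kl; case n'l: (occ n' l) => /=; first by rewrite addr0.
rewrite occD_pow2 ?n'kl ?n'l // (negbTE kl) addbF occD_pow2_same n'k /=.
rewrite -addnA [(2 ^ k + _)%N]addnC addnA addnK.
case: (m == _ :> nat); last by rewrite addr0.
have n'lk : ~~ occ (n' + 2 ^ l) k by rewrite occD_pow2 ?n'l // (negbTE kl) addbF.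
rewrite (jwsignD_pow2 _ n'lk) (jwsignD_pow2 _ (negbT n'l)) !(jwsignD_pow2 _ n'k) !ltnn !mulr1.
have := swap_signM kl; rewrite /swap_sign.
set a := if (k < l)%N then _ else _; set b := if (l < k)%N then _ else _ => ab.
transitivity (jw n' k * jw n' l * (a * b + 1)); first by ring.
by rewrite ab addNr mulr0.
Qed.

End CanonicalAnticommutation.

Section Adjoint.
Variables (R : realType) (n : nat).

Lemma adjmxM (A B : 'M[R[i]]_n) : adjmx (A *m B) = adjmx B *m adjmx A.
Proof. by rewrite /adjmx trmx_mul map_mxM. Qed.

Lemma adjmxD (A B : 'M[R[i]]_n) : adjmx (A + B) = adjmx A + adjmx B.
Proof. by rewrite /adjmx raddfD map_mxD. Qed.

End Adjoint.

Lemma anticomm_lincomb (K : comPzRingType) n (a a' c c' : 'M[K]_n) (d d' : K)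
    {x y x' y' : K} :
  a *m a' + a' *m a = 0 -> c *m c' + c' *m c = 0 ->
  a *m c' + c' *m a = d *: 1%:M -> a' *m c + c *m a' = d' *: 1%:M ->
  (x *: a + y *: c) *m (x' *: a' + y' *: c') + (x' *: a' + y' *: c') *m (x *: a + y *: c)
  = (x * y' * d + y * x' * d') *: 1%:M.
Proof.
rewrite !mulmxDl !mulmxDr -!scalemxAl -!scalemxAr !scalerA.
(* Once the eight products are abstracted, each entry is a commutative-ring identity. *)
move: (a *m a') (a' *m a) (c *m c') (c' *m c) (a *m c') (c' *m a) (a' *m c) (c *m a').
move=> P1 P2 P3 P4 P5 P6 P7 P8 /matrixP e1 /matrixP e2 /matrixP e3 /matrixP e4.
apply/matrixP => i j; move: (e1 i j) (e2 i j) (e3 i j) (e4 i j); rewrite !mxE.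
by do 4!move=> /(canRL (addrK _)) ->; ring.
Qed.

Section Majorana.
Variables (R : realType) (theta : R) (L : nat).
Local Notation C := R[i].
Local Notation M := 'M[C]_(2 ^ L).

Lemma annih_anticomm (k l : 'I_L) : annih R k *m annih R l + annih R l *m annih R k = 0.
Proof. by rewrite !annihE annih_colmx_anticomm. Qed.

Lemma creat_anticomm (k l : 'I_L) : creat R k *m creat R l + creat R l *m creat R k = 0.
Proof.
by rewrite /creat -!adjmxM -adjmxD addrC annih_anticomm /adjmx trmx0 map_mx0.
Qed.

Lemma annih_creat_anticomm (k l : 'I_L) :
  annih R k *m creat R l + creat R l *m annih R k = (k == l)%:R *: 1%:M.
Proof.
rewrite annihE creatE annih_creat_colmx_anticomm //.
by rewrite -[k == l]/(nat_of_ord k == l); case: (_ == _); rewrite ?scale1r ?scale0r.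
Qed.

Definition majorana (t : bool) (k : 'I_L) : M := if t then beven theta k else bodd theta k.

Lemma phase_conj : phase theta * Num.conj (phase theta) = 1.
Proof.
rewrite -normCK /phase normc_def /= -rmorphXn sqr_sqrtr ?addr_ge0 ?sqr_ge0 //.
by rewrite cos2Dsin2.
Qed.

Lemma majorana_anticomm t k t' l :
  majorana t k *m majorana t' l + majorana t' l *m majorana t k =
  (if (t == t') && (k == l) then 2 else 0) *: 1%:M.
Proof.
set u := phase theta; set alpha := fun t : bool => if t then - 'i * u else u.
set beta := fun t : bool => if t then 'i * Num.conj u else Num.conj u.
have majoranaE s j : majorana s j = alpha s *: annih R j + beta s *: creat R j by case: s.
rewrite !majoranaE (anticomm_lincomb (annih_anticomm k l) (creat_anticomm k l)
  (annih_creat_anticomm k l) (annih_creat_anticomm l k)).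
have [_|_] := eqVneq k l; last by rewrite andbF !mulr0 addr0.
rewrite andbT !mulr1; congr (_ *: _).
have uu : u * Num.conj u = 1 := phase_conj.
have ii : 'i * 'i = -1 :> C by rewrite -expr2 sqr_i.
case: t; case: t' => /=; rewrite ?mulr1.
- by transitivity (- 2 * ('i * 'i) * (u * Num.conj u)); [ring | rewrite ii uu; ring].
- by ring.
- by ring.
- by transitivity (2 * (u * Num.conj u)); [ring | rewrite uu mulr1].
Qed.

Lemma majorana_sqr t k : majorana t k *m majorana t k = 1%:M.
Proof.
have := majorana_anticomm t k t k; rewrite !eqxx -mulr2n -scaler_nat.
by apply: scalerI; rewrite pnatr_eq0.
Qed.

Lemma majorana_anticomm_neq t k t' l : (t, k) != (t', l) ->
  majorana t k *m majorana t' l = - (majorana t' l *m majorana t k).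
Proof.
rewrite xpair_eqE => /negbTE neq; apply/eqP; rewrite -addr_eq0.
by rewrite majorana_anticomm neq scale0r.
Qed.

End Majorana.

Lemma commrM_anti (Rg : pzRingType) (x y z : Rg) :
  x * y = - (y * x) -> x * z = - (z * x) -> GRing.comm x (y * z).
Proof. by move=> xy xz; rewrite /GRing.comm mulrA xy mulNr -mulrA xz mulrN opprK mulrA. Qed.

Definition spin (Rg : pzRingType) L (s : 'I_L -> bool) (j : 'I_L) : Rg :=
  if s j then 1 else -1.
Arguments spin {Rg L}.

Definition flip_spin L (s : 'I_L -> bool) (k : 'I_L) : 'I_L -> bool :=
  fun j => if j == k then ~~ s j else s j.

Lemma spin_flip (Rg : pzRingType) L (s : 'I_L -> bool) k :
  spin (flip_spin s k) k = - spin s k :> Rg.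
Proof. by rewrite /spin /flip_spin eqxx; case: (s k); rewrite ?opprK. Qed.

Lemma spin_central (Rg : pzRingType) L (s : 'I_L -> bool) j (x : Rg) : GRing.comm (spin s j) x.
Proof.
by rewrite /spin; case: (s j); [exact: commr_sym (commr1 _) | exact: commr_sym (commrN1 _)].
Qed.

Lemma spin_sqr (Rg : pzRingType) L (s : 'I_L -> bool) j : spin s j * spin s j = 1 :> Rg.
Proof. by rewrite /spin; case: (s j); rewrite ?mulr1 ?mulrNN ?mulr1. Qed.

Section BondProjections.
Variables (Rg : pzRingType) (L : nat) (b : bool -> 'I_L -> Rg) (c h : Rg).
Hypothesis b_sqr : forall t k, b t k * b t k = 1.
Hypothesis b_anticomm : forall t k t' l, (t, k) != (t', l) -> b t k * b t' l = - (b t' l * b t k).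
Hypothesis c_central : forall x, GRing.comm c x.
Hypothesis c_sqr : c * c = -1.
Hypothesis h_central : forall x, GRing.comm h x.
Hypothesis h_half : h + h = 1.

Definition bond j := c * (b true j * b false (ordS j)).

Lemma bond_sqr j : bond j * bond j = 1.
Proof.
rewrite /bond; set u := b true j; set v := b false (ordS j).
have vu : v * u = - (u * v) by apply: b_anticomm.
have uv_sqr : (u * v) * (u * v) = -1.
  by rewrite -mulrA (mulrA v) vu mulNr mulrN !mulrA b_sqr mul1r b_sqr.
by rewrite -mulrA (mulrA (u * v)) -(c_central (u * v)) -mulrA uv_sqr mulrA c_sqr mulrNN mulr1.
Qed.

Lemma bond_comm j k : GRing.comm (bond j) (bond k).
Proof.
rewrite /bond; apply: commrM; first exact: commr_sym (c_central _).
apply: commr_sym; apply: commrM; first exact: commr_sym (c_central _).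
have [->|jk] := eqVneq j k; first exact: commr_refl.
by apply: commrM; apply: commr_sym; apply: commrM_anti; apply: b_anticomm;
  rewrite xpair_eqE /= ?(inj_eq (@ordS_inj _)) // eq_sym.
Qed.

Lemma b_bond_anticomm j : b true j * bond j = - (bond j * b true j).
Proof.
rewrite /bond mulrA -(c_central (b true j)) -!mulrA -mulrN; congr (_ * _).
have vu : b false (ordS j) * b true j = - (b true j * b false (ordS j)) by apply: b_anticomm.
by rewrite mulrA b_sqr mul1r vu mulrN mulrA b_sqr mul1r opprK.
Qed.

Lemma b_bond_comm j k : j != k -> GRing.comm (b true j) (bond k).
Proof.
move=> jk; rewrite /bond; apply: commrM; first exact: commr_sym (c_central _).
by apply: commrM_anti; apply: b_anticomm; rewrite xpair_eqE ?eqxx.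
Qed.

Definition bond_proj (s : 'I_L -> bool) j := h * (1 + spin s j * bond j).
Definition joint_proj s (xs : seq 'I_L) := \prod_(j <- xs) bond_proj s j.

Lemma commr_bond_proj x s j : GRing.comm x (bond j) -> GRing.comm x (bond_proj s j).
Proof.
move=> xj; apply: commrM; first exact: commr_sym (h_central _).
by apply: commrD; [exact: commr1 | apply: commrM => //; exact: commr_sym (spin_central _ _ _)].
Qed.

Lemma bond_proj_comm_bond s j k : GRing.comm (bond_proj s j) (bond k).
Proof. exact/commr_sym/commr_bond_proj/bond_comm. Qed.

Lemma joint_proj_comm_bond s xs k : GRing.comm (joint_proj s xs) (bond k).
Proof. by apply/commr_sym/commr_prod => j _; apply/commr_sym/bond_proj_comm_bond. Qed.

Lemma joint_proj_comm_bond_proj s xs s' k :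
  GRing.comm (joint_proj s xs) (bond_proj s' k).
Proof. by apply/commr_sym/commr_prod => j _; apply/commr_bond_proj/bond_proj_comm_bond. Qed.

Lemma bond_proj_bond s j : bond_proj s j * bond j = spin s j * bond_proj s j.
Proof.
rewrite /bond_proj mulrA -(h_central (spin s j)) -!mulrA; congr (_ * _).
rewrite mulrDl mul1r -mulrA bond_sqr mulr1 mulrDr mulr1 mulrA spin_sqr mul1r.
by rewrite addrC.
Qed.

Lemma joint_proj_bond s xs j : j \in xs -> joint_proj s xs * bond j = spin s j * joint_proj s xs.
Proof.
rewrite /joint_proj; elim: xs => [|k xs IH] //; rewrite inE big_cons.
case/orP => [/eqP ->|jx]; first by rewrite -mulrA joint_proj_comm_bond mulrA bond_proj_bond mulrA.
by rewrite -mulrA IH // mulrA -(spin_central s j (bond_proj s k)) mulrA.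
Qed.

Lemma joint_proj_bond_sum s xs (a : 'I_L -> Rg) :
  (forall j x, GRing.comm (a j) x) -> (forall j, j \in xs) ->
  joint_proj s xs * (\sum_j a j * bond j) = (\sum_j a j * spin s j) * joint_proj s xs.
Proof.
move=> a_central xs_full; rewrite mulr_sumr mulr_suml; apply: eq_bigr => j _.
by rewrite mulrA -(a_central j (joint_proj s xs)) -mulrA joint_proj_bond // !mulrA.
Qed.

Lemma bond_proj_flipD s k : bond_proj s k + bond_proj (flip_spin s k) k = 1.
Proof. by rewrite /bond_proj spin_flip -mulrDr mulNr addrACA subrr addr0 mulrDr mulr1. Qed.

Lemma joint_proj_flip s k xs : k \notin xs -> joint_proj (flip_spin s k) xs = joint_proj s xs.
Proof.
move=> kx; apply: eq_big_seq => j jx.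
have jk : j != k by apply: (contraNneq _ kx) => <-.
by rewrite /bond_proj /spin /flip_spin (negbTE jk).
Qed.

Lemma conj_bond_proj s k : b true k * bond_proj s k * b true k = bond_proj (flip_spin s k) k.
Proof.
rewrite /bond_proj spin_flip mulrA -(h_central (b true k)) -!mulrA; congr (_ * _).
rewrite mulrDl mul1r mulrDr b_sqr; congr (_ + _).
rewrite -mulrA mulrA -(spin_central s k (b true k)) -mulrA (mulrA (b true k)) b_bond_anticomm.
by rewrite mulNr -mulrA b_sqr mulr1 mulrN mulNr.
Qed.

Lemma joint_proj_neq0 s xs : (1 : Rg) != 0 -> uniq xs -> joint_proj s xs != 0.
Proof.
move=> one_neq0; elim: xs => [|k xs IH] /=; first by rewrite /joint_proj big_nil.
case/andP => kx ux; rewrite /joint_proj big_cons -/(joint_proj s xs).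
apply: (contraNneq _ (IH ux)) => P0; apply/eqP.
have bP : GRing.comm (b true k) (joint_proj s xs).
  rewrite /joint_proj big_seq; apply: commr_prod => j jx.
  by apply/commr_bond_proj/b_bond_comm; apply: (contraNneq _ kx) => ->.
have flipP0 : bond_proj (flip_spin s k) k * joint_proj s xs = 0.
  by rewrite -conj_bond_proj -mulrA bP mulrA -(mulrA (b true k)) P0 mulr0 mul0r.
by rewrite -[joint_proj s xs]mul1r -(bond_proj_flipD s k) mulrDl P0 flipP0 addr0.
Qed.

Lemma exists_mul_joint_proj_neq0 xs (X : Rg) :
  uniq xs -> X != 0 -> exists s, X * joint_proj s xs != 0.
Proof.
move=> + X_neq0; elim: xs => [|k xs IH] /=.
  by exists (fun=> true); rewrite /joint_proj big_nil mulr1.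
case/andP => kx /IH [s XP_neq0].
have XPE : X * joint_proj s xs =
    X * joint_proj s xs * bond_proj s k + X * joint_proj s xs * bond_proj (flip_spin s k) k.
  by rewrite -mulrDr bond_proj_flipD mulr1.
rewrite /joint_proj; have [XPQ0|XPQ_neq0] := eqVneq (X * joint_proj s xs * bond_proj s k) 0.
  exists (flip_spin s k); rewrite big_cons -/(joint_proj _ xs) joint_proj_flip //.
  rewrite -joint_proj_comm_bond_proj mulrA; apply: (contraNneq _ XP_neq0) => XPQ'0.
  by apply/eqP; rewrite XPE XPQ0 XPQ'0 addr0.
by exists s; rewrite big_cons -/(joint_proj _ xs) -joint_proj_comm_bond_proj mulrA.
Qed.

End BondProjections.

Section Energy.
Variables (R : realType) (L : nat) (w : 'I_L -> R).

Definition energy (s : 'I_L -> bool) : R := \sum_j w j * spin s j.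

Definition ground_spins : 'I_L -> bool := fun j => w j < 0.

Lemma energy_sub_ground s :
  energy s - energy ground_spins = \sum_j (if s j == ground_spins j then 0 else 2 * `|w j|).
Proof.
rewrite /energy -sumrB; apply: eq_bigr => j _; rewrite /ground_spins /spin.
by case: (s j); case: ltrP => wj /=; rewrite ?subrr ?(ger0_norm wj) ?(ltr0_norm wj) //; ring.
Qed.

Lemma energy_ground_le s : energy ground_spins <= energy s.
Proof.
rewrite -subr_ge0 energy_sub_ground; apply: sumr_ge0 => j _.
by case: (_ == _); rewrite ?mulr_ge0.
Qed.

Lemma energy_gap s j : s j != ground_spins j -> energy ground_spins + 2 * `|w j| <= energy s.
Proof.
move=> sj; rewrite addrC -lerBrDr energy_sub_ground (bigD1 j) //= (negbTE sj) lerDl.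
by apply: sumr_ge0 => i _; case: (_ == _); rewrite ?mulr_ge0.
Qed.

End Energy.

Lemma scalar_mx_central (K : comPzRingType) n (a : K) (x : 'M[K]_n) : GRing.comm a%:M x.
Proof. by rewrite /GRing.comm -mulmxE scalar_mxC. Qed.

Section Spectrum.
Variables (R : realType) (theta : R) (L : nat) (w : 'I_L -> R).
Local Notation C := R[i].
Local Notation M := 'M[C]_(2 ^ L).

Let b_mx := @majorana R theta L.
Let i_mx : M := 'i%:M.
Let half_mx : M := (2^-1 : C)%:M.
Let proj s := joint_proj b_mx i_mx half_mx s (enum 'I_L).

Let b_mx_sqr t k : b_mx t k * b_mx t k = 1.
Proof. exact: majorana_sqr. Qed.

Let b_mx_anticomm t k t' l : (t, k) != (t', l) ->
  b_mx t k * b_mx t' l = - (b_mx t' l * b_mx t k).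
Proof. exact: majorana_anticomm_neq. Qed.

Let i_mx_central x : GRing.comm i_mx x. Proof. exact: scalar_mx_central. Qed.
Let half_mx_central x : GRing.comm half_mx x. Proof. exact: scalar_mx_central. Qed.

Let i_mx_sqr : i_mx * i_mx = -1.
Proof. by rewrite /i_mx -mulmxE -scalar_mxM -expr2 sqr_i raddfN. Qed.

Let half_mx_half : half_mx + half_mx = 1.
Proof.
have halfD : (2^-1 + 2^-1 : C) = 1 by field.
by rewrite /half_mx -raddfD /= halfD.
Qed.

Lemma HL_bonds : HL theta w = \sum_j (w j)%:C%:M * bond b_mx i_mx j.
Proof.
apply: eq_bigr => j _; rewrite /bond /i_mx /b_mx /majorana /=.
by rewrite -!mulmxE !mul_scalar_mx scalerA.
Qed.

Lemma proj_HL s : proj s * HL theta w = (energy w s)%:C%:M * proj s.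
Proof.
rewrite HL_bonds (joint_proj_bond_sum b_mx_sqr b_mx_anticomm i_mx_central i_mx_sqr
  half_mx_central) => [|j x|j]; last by rewrite mem_enum.
- congr (_ * _); rewrite /energy rmorph_sum raddf_sum; apply: eq_bigr => j _.
  by rewrite /spin; case: (s j); rewrite ?mulr1 ?mulrN1 ?rmorphN ?raddfN.
- exact: scalar_mx_central.
Qed.

Lemma proj_HL_comm s : GRing.comm (proj s) (HL theta w).
Proof.
rewrite HL_bonds; apply: commr_sum => j _; apply: commrM.
  exact/commr_sym/scalar_mx_central.
exact: (joint_proj_comm_bond b_mx_anticomm i_mx_central half_mx_central).
Qed.

Lemma proj_neq0 s : proj s != 0.
Proof.
have one_neq0 : (1 : M) != 0.
  have pos : (0 < 2 ^ L)%N by rewrite expn_gt0.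
  apply/eqP => /matrixP /(_ (Ordinal pos) (Ordinal pos)); rewrite !mxE eqxx.
  by move/eqP; rewrite oner_eq0.
exact: (joint_proj_neq0 b_mx_sqr b_mx_anticomm i_mx_central half_mx_central half_mx_half s
  one_neq0 (enum_uniq _)).
Qed.

Lemma eigenvalue_HL_energy s : eigenvalue (HL theta w) (energy w s)%:C.
Proof.
apply/eigenvalueP; have [i /negPf rowi|rows0] := pickP (fun i => row i (proj s) != 0).
  exists (row i (proj s)); last by rewrite rowi.
  by rewrite -row_mul mulmxE proj_HL -mulmxE mul_scalar_mx !rowE scalemxAr.
case/eqP: (proj_neq0 s); apply/row_matrixP => i.
by move/negbFE/eqP: (rows0 i) ->; rewrite row0.
Qed.

Lemma eigenvalue_HLP l : eigenvalue (HL theta w) l -> exists s, l = (energy w s)%:C.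
Proof.
case/eigenvalueP => v vH v_neq0; pose X : M := \matrix_(i < 2 ^ L) v.
have X_neq0 : X != 0.
  have pos : (0 < 2 ^ L)%N by rewrite expn_gt0.
  apply: (contraNneq _ v_neq0) => X0.
  by rewrite -(rowK (fun=> v) (Ordinal pos)) -/X X0 row0.
have XH : X * HL theta w = l *: X.
  by apply/row_matrixP => i; rewrite -mulmxE row_mul rowK vH; apply/rowP => j; rewrite !mxE.
have [s XP_neq0] := @exists_mul_joint_proj_neq0 _ _ _ _ _ b_mx_anticomm i_mx_central
  half_mx_central half_mx_half (enum 'I_L) X (enum_uniq _) X_neq0.
have XPH_energy : X * proj s * HL theta w = (energy w s)%:C *: (X * proj s).
  by rewrite -mulrA proj_HL mulrA -(scalar_mx_central _ X) -mulrA -!mulmxE mul_scalar_mx.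
have XPH_l : X * proj s * HL theta w = l *: (X * proj s).
  by rewrite -mulrA proj_HL_comm mulrA XH -!mulmxE scalemxAl.
exists s; apply/eqP; move: XPH_l; rewrite XPH_energy => /eqP.
by rewrite eq_sym -subr_eq0 -scalerBl scaler_eq0 (negbTE XP_neq0) orbF subr_eq0.
Qed.

End Spectrum.

Theorem proposition3p11 (R : realType) (gamma theta : R) :
  0 < gamma ->
  exists c : R, 0 < c /\
    forall (L : nat), (2 <= L)%N ->
    forall w : 'I_L -> R, (forall j, 2 * gamma <= `|w j|) ->
      spectral_gap_ge (HL theta w) c.
Proof.
move=> gamma_gt0; exists (4 * gamma); split=> [|L L_ge2 w w_ge]; first lra.
set s0 := ground_spins w.
have gap s j : s j != s0 j -> energy w s0 + 4 * gamma <= energy w s.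
  by move=> sj; apply: le_trans (energy_gap sj); rewrite lerD2l; have := w_ge j; lra.
exists (energy w s0)%:C; split.
- split=> [|l /eigenvalue_HLP [s ->]]; first exact: eigenvalue_HL_energy.
  by rewrite lecR energy_ground_le.
- pose j0 : 'I_L := Ordinal (leq_trans (isT : 0 < 2)%N L_ge2).
  have flipped_j0 : flip_spin s0 j0 j0 != s0 j0 by rewrite /flip_spin eqxx; case: (s0 j0).
  exists (energy w (flip_spin s0 j0))%:C; split; first exact: eigenvalue_HL_energy.
  by apply/eqP => /complexI E0E; have := gap _ _ flipped_j0; rewrite E0E; lra.
- move=> l /eigenvalue_HLP [s ->] l_neq; rewrite -rmorphD lecR.
  have [/existsP [j sj]|] := boolP [exists j, s j != s0 j]; first exact: gap sj.
  rewrite negb_exists => /forallP s_ground; case/eqP: l_neq; congr (_%:C); rewrite /energy.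
  by apply: eq_bigr => j _; rewrite /spin (eqP (negbNE (s_ground j))).
Qed.
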